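(* Let $n\ge 5$. If there exists a listing $\pi_0,\ldots,\pi_{n!-1}$ of all permutations of $\{1,\ldots,n\}$ (written as words) such that consecutive permutations differ by interchanging the symbols in two adjacent positions and $\pi_{i+n!/2}$ is the reversal of $\pi_i$ for all $0\le i<n!/2$, then $n\equiv 0$ or $1 \pmod 4$.
   Context: The reversal of a word $a_1a_2\cdots a_n$ is $a_na_{n-1}\cdots a_1$. *)

From mathcomp Require Import all_boot.
Set Implicit Arguments. Unset Strict Implicit. Unset Printing Implicit Defensive.

Definition is_perm_word (n : nat) (w : seq nat) : bool := perm_eq w (iota 1 n).

Definition swap_adj (k : nat) (w : seq nat) : seq nat :=
  take k w ++ [:: nth 0 w k.+1; nth 0 w k] ++ drop k.+2 w.

Definition adj_transp (w w' : seq nat) : Prop :=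
  exists2 k, k.+1 < size w & w' = swap_adj k w.

Definition reversal_symmetric_listing (n : nat) (L : seq (seq nat)) : Prop :=
  [/\ size L = n`!, uniq L, all (is_perm_word n) L,
      (forall i, i.+1 < n`! -> adj_transp (nth [::] L i) (nth [::] L i.+1))
    & (forall i, i < n`! %/ 2 -> nth [::] L (i + n`! %/ 2) = rev (nth [::] L i))].

(* Swapping two adjacent distinct symbols changes the number of inversions by
   one, so the parity of the inversion count alternates along the listing.
   Since 4 divides n!, the word pi_(n!/2) = rev pi_0 is reached after an even
   number of steps and has the parity of pi_0.  But the inversions of a word
   and of its reversal together make up all C(n,2) pairs, so C(n,2) is even,
   which happens exactly when n = 0 or 1 (mod 4). *)
From mathcomp Require Import all_boot zify.

Set Implicit Arguments.
Unset Strict Implicit.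
Unset Printing Implicit Defensive.

Fixpoint inversions (w : seq nat) : nat :=
  if w is x :: s then count (fun y => y < x) s + inversions s else 0.

Lemma inversions_rcons s x :
  inversions (rcons s x) = inversions s + count (fun y => x < y) s.
Proof. by elim: s => [|y s IHs] //=; rewrite IHs -cats1 count_cat /=; lia. Qed.

Lemma count_ltn_gtn (x : nat) (s : seq nat) : x \notin s ->
  count (fun y => y < x) s + count (fun y => x < y) s = size s.
Proof.
elim: s => [|y s IHs] //=; rewrite in_cons negb_or => /andP[neq_xy /IHs <-].
by case: ltngtP neq_xy => //= _ _; lia.
Qed.

Lemma inversions_rev w : uniq w ->
  inversions w + inversions (rev w) = 'C(size w, 2).
Proof.
elim: w => [|x s IHs] //= /andP[x_notin_s uniq_s].
rewrite rev_cons inversions_rcons count_rev [_ + count _ _]addnC addnACA.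
by rewrite count_ltn_gtn // IHs // binS bin1 addnC.
Qed.

Lemma perm_swap_adj k w : k.+1 < size w -> perm_eq (swap_adj k w) w.
Proof.
move=> lt_k1_w; rewrite -{2}(cat_take_drop k w) perm_cat2l.
rewrite (drop_nth 0 (ltnW lt_k1_w)) (drop_nth 0 lt_k1_w).
by rewrite (perm_catCA [:: _] [:: _]).
Qed.

Lemma odd_inversions_swap_adj k w :
  k.+1 < size w -> nth 0 w k != nth 0 w k.+1 ->
  odd (inversions (swap_adj k w)) = ~~ odd (inversions w).
Proof.
elim: w k => [|x w IHw] [|k] //.
- case: w {IHw} => [|y s] //= _; rewrite /swap_adj /= drop0 !oddD => neq_xy.
  by case: ltngtP neq_xy => //= _ _; case: (odd _); case: (odd _); case: (odd _).
- move=> /= lt_k1_w neq_wk; change (swap_adj k.+1 (x :: w)) with (x :: swap_adj k w).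
  rewrite /= (permP (perm_swap_adj (lt_k1_w : k.+1 < size w))).
  by rewrite !oddD IHw // addbN.
Qed.

Lemma adj_transp_odd_inversions w w' : uniq w -> adj_transp w w' ->
  odd (inversions w') = ~~ odd (inversions w).
Proof.
move=> uniq_w [k lt_k1_w ->]; apply: odd_inversions_swap_adj => //.
by rewrite nth_uniq ?(ltnW lt_k1_w) // neq_ltn ltnSn.
Qed.

Lemma alternating_bool_seq (f : nat -> bool) m :
  (forall i, i < m -> f i.+1 = ~~ f i) -> f m = f 0 (+) odd m.
Proof.
elim: m => [|m IHm] flip; first by rewrite addbF.
by rewrite flip // IHm => [|i lt_im]; rewrite ?flip ?addbN // ltnW.
Qed.

Lemma bin2S n : 'C(n.+1, 2) = 'C(n, 2) + n.
Proof. by rewrite binS bin1. Qed.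

Lemma odd_bin2 n : odd 'C(n, 2) = (2 <= n %% 4).
Proof.
have odd_bin2_add4 m : odd 'C(m.+4, 2) = odd 'C(m, 2).
  by rewrite !bin2S !oddD !oddS; case: (odd _); case: (odd _).
rewrite {1}(divn_eq n 4); move: (n %/ 4) (n %% 4) (ltn_pmod n (isT : 0 < 4)).
elim=> [|q IHq] r lt_r4.
- by case: r lt_r4 => [|[|[|[|]]]].
- by rewrite mulSn -addnA add4n odd_bin2_add4 IHq.
Qed.

Lemma even_half_dvd4 m : 4 %| m -> ~~ odd (m %/ 2).
Proof.
move/dvdnP=> [q ->].
by rewrite (mulnA q 2 2) mulnK // oddM andbF.
Qed.

Theorem proposition2 (n : nat) :
  5 <= n ->
  (exists L : seq (seq nat), reversal_symmetric_listing n L) ->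
  (n %% 4 == 0) || (n %% 4 == 1).
Proof.
move=> n_ge5 [L [size_L _ perm_L adj_L rev_L]].
set h := n`! %/ 2 in rev_L; set pi := nth [::] L.
have dvd4_fact : 4 %| n`! by apply: dvdn_fact; lia.
have even_h : ~~ odd h by apply: even_half_dvd4.
have [h_gt0 lt_h_fact] : 0 < h /\ h < n`! by have := fact_gt0 n; lia.
have pi_perm i : i < n`! -> is_perm_word n (pi i).
  by move=> lt_i; apply: (allP perm_L); rewrite mem_nth ?size_L.
have pi_uniq i : i < n`! -> uniq (pi i).
  by move/pi_perm/perm_uniq->; apply: iota_uniq.
have parity_h : odd (inversions (pi h)) = odd (inversions (pi 0)) (+) odd h.
  apply: (alternating_bool_seq (f := fun i => odd (inversions (pi i)))) => i lt_ih.
  by apply: adj_transp_odd_inversions; [apply: pi_uniq | apply: adj_L]; lia.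
have := inversions_rev (pi_uniq 0 (fact_gt0 n)).
rewrite (perm_size (pi_perm 0 (fact_gt0 n))) size_iota -rev_L // add0n => sum_inv.
have := odd_bin2 n; rewrite -sum_inv oddD parity_h (negbTE even_h) addbF addbb.
by case: (n %% 4) => [|[|]].
Qed.
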